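(* Let $p,k\ge 1$ be integers, let $a_1,\dots,a_k\in\mathbb{R}$, and let $\mathbf{f}:\mathbb{R}^p\to\mathbb{R}^p$ be a differentiable flux. Let $\mathbb{M}_1,\dots,\mathbb{M}_k:\mathbb{R}^p\to\mathbb{R}^p$ be differentiable maps satisfying, for all $\mathbf{u}$, $\sum_{i=1}^k \mathbb{M}_i(\mathbf{u})=\mathbf{u}$ and $\sum_{i=1}^k a_i\mathbb{M}_i(\mathbf{u})=\mathbf{f}(\mathbf{u})$, and set $\mathbf{m}_2(\mathbf{u})=\sum_{i=1}^k a_i^2\mathbb{M}_i(\mathbf{u})$. Fix $\mathbf{u}$ and suppose there exists a strictly convex entropy $\eta(\mathbf{u})$ with Hessian matrix $\mathbf{A}_0$ such that (1) $\mathbf{A}_0\mathbf{f}'(\mathbf{u})$ is symmetric, (2) $\mathbf{A}_0\mathbb{M}_i'(\mathbf{u})$ is symmetric positive definite for all $i$, and (3) $\min_i|a_i|>\rho(\mathbf{f}'(\mathbf{u}))$ (spectral radius). Then the matrix $\mathbf{m}_2'(\mathbf{u})-(\mathbf{f}'(\mathbf{u}))^2$ has real strictly positive eigenvalues and is invertible.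
   Context: Primes denote Jacobian matrices with respect to $\mathbf{u}$. In the kinetic model, $\mathbf{m}_2=\mathbb{P}\Lambda^2\mathbb{M}$ with $\Lambda=\mathrm{diag}(a_1\mathbf{I}_p,\dots,a_k\mathbf{I}_p)$ and $\mathbb{P}=(\mathbf{I}_p\ \cdots\ \mathbf{I}_p)$. *)

From HB Require Import structures.
From mathcomp Require Import all_boot all_order all_algebra.
From mathcomp Require Import all_classical all_reals all_analysis.
From mathcomp Require Import complex.
Set Implicit Arguments. Unset Strict Implicit. Unset Printing Implicit Defensive.
Import Order.TTheory GRing.Theory Num.Theory.
Import numFieldNormedType.Exports.
Local Open Scope classical_set_scope.
Local Open Scope ring_scope.

Definition ebasis {R : realType} {p : nat} (j : 'I_p) : 'rV[R]_p := delta_mx 0 j.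

(* Jacobian matrix in the usual convention: entry (i,j) = d f_i / d u_j.
   (MathComp-Analysis' 'J f u acts on row vectors, hence the transpose.) *)
Definition Jac {R : realType} {p : nat} (f : 'rV[R]_p -> 'rV[R]_p) (u : 'rV[R]_p)
  : 'M[R]_p := ('J f u)^T.

Definition hessian {R : realType} {p : nat} (eta : 'rV[R]_p -> R) (u : 'rV[R]_p)
  : 'M[R]_p := \matrix_(i, j) 'D_(ebasis i) ('D_(ebasis j) eta) u.

Definition strictly_convex {R : realType} {p : nat} (eta : 'rV[R]_p -> R) : Prop :=
  forall (x y : 'rV[R]_p) (t : R), x != y -> 0 < t < 1 ->
    eta (t *: x + (1 - t) *: y) < t * eta x + (1 - t) * eta y.

Definition cmx {R : realType} {p : nat} (A : 'M[R]_p) : 'M[R[i]]_p :=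
  map_mx (fun x => Complex x 0) A.

Definition cmodulus {R : realType} (z : R[i]) : R :=
  Num.sqrt (complex.Re z ^+ 2 + complex.Im z ^+ 2).

Definition spectral_radius {R : realType} {p : nat} (A : 'M[R]_p) : R :=
  sup [set r : R | exists lam : R[i], eigenvalue (cmx A) lam /\ r = cmodulus lam].

Definition symmetric_mx {R : realType} {p : nat} (A : 'M[R]_p) : Prop := A^T = A.

Definition posdef_mx {R : realType} {p : nat} (A : 'M[R]_p) : Prop :=
  symmetric_mx A /\ forall v : 'rV[R]_p, v != 0 -> 0 < (v *m A *m v^T) 0 0.

From HB Require Import structures.
From mathcomp Require Import all_boot all_order all_algebra.
From mathcomp Require Import all_classical all_reals all_analysis.
From mathcomp Require Import complex.
Import Order.TTheory GRing.Theory Num.Theory.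
Import numFieldNormedType.Exports.
Set Implicit Arguments.
Unset Strict Implicit.
Unset Printing Implicit Defensive.
Local Open Scope ring_scope.

(* Differentiating the moment relations at u gives, with P_i := M_i'(u) and
   F := f'(u), sum P_i = I, sum a_i P_i = F and m2'(u) = sum a_i^2 P_i, so
   B = m2'(u) - F^2 is the matrix variance sum (a_i - F) P_i (a_i - F).  Since
   A0 F is symmetric, (a_i - F)^T A0 = A0 (a_i - F), hence
   A0 B = sum (a_i - F)^T (A0 P_i) (a_i - F) is positive definite: each a_i - F
   is invertible because |a_i| exceeds the spectral radius of F.  Also
   A0 = sum A0 P_i is positive definite.  Finally, if v B = lam v and w := v A0^-1, pairing
   w (A0 B) = lam w A0 with the conjugate of w exhibits lam as a quotient of two
   positive reals. *)

Lemma lin1_mx_lincomb (R : pzRingType) m n k (c : 'I_k -> R)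
    (L : 'I_k -> 'rV[R]_m -> 'rV[R]_n) :
  lin1_mx (fun v => \sum_(i < k) c i *: L i v) = \sum_(i < k) c i *: lin1_mx (L i).
Proof.
apply/matrixP => i j; rewrite mxE !summxE; apply: eq_bigr => l _.
by rewrite !mxE.
Qed.

Lemma diff_lincomb (R : numFieldType) (V W : normedModType R) k (c : 'I_k -> R)
    (F : 'I_k -> V -> W) x :
  (forall i, differentiable (F i) x) ->
  'd (fun y => \sum_(i < k) c i *: F i y) x = (fun v => \sum_(i < k) c i *: 'd (F i) x v)
  :> (V -> W).
Proof.
move=> dF.
suff : is_diff x (fun y => \sum_(i < k) c i *: F i y)
                 (fun v => \sum_(i < k) c i *: 'd (F i) x v).
  by move=> dsum; apply: diff_val.
have -> : (fun y => \sum_(i < k) c i *: F i y) = \sum_(i < k) c i *: F i.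
  by rewrite fct_sumE.
have -> : (fun v => \sum_(i < k) c i *: 'd (F i) x v) = \sum_(i < k) c i *: ('d (F i) x : V -> W).
  by rewrite fct_sumE.
elim/big_ind2: _ => [|g dg h dh gdg hdh|i _].
- exact: is_diff_cst.
- exact: is_diffD.
- by apply: is_diffZ; apply: differentiableP.
Qed.

Section Jacobian.
Variables (R : realType) (n : nat).
Implicit Types (f : 'rV[R]_n -> 'rV[R]_n) (x : 'rV[R]_n).

Lemma Jac_diff f x (L : 'rV[R]_n -> 'rV[R]_n) :
  'd f x = L :> (_ -> _) -> Jac f x = (lin1_mx L)^T.
Proof. by move=> dfL; rewrite /Jac /jacobian dfL. Qed.

Lemma Jac_lincomb k (c : 'I_k -> R) (F : 'I_k -> 'rV[R]_n -> 'rV[R]_n) x :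
  (forall i, differentiable (F i) x) ->
  Jac (fun y => \sum_(i < k) c i *: F i y) x = \sum_(i < k) c i *: Jac (F i) x.
Proof.
move=> dF; have /Jac_diff -> := diff_lincomb c dF.
by rewrite lin1_mx_lincomb linear_sum; apply: eq_bigr => i _; rewrite linearZ.
Qed.

Lemma Jac_sum k (F : 'I_k -> 'rV[R]_n -> 'rV[R]_n) x :
  (forall i, differentiable (F i) x) ->
  Jac (fun y => \sum_(i < k) F i y) x = \sum_(i < k) Jac (F i) x.
Proof.
move=> dF; have -> : (fun y => \sum_(i < k) F i y) = (fun y => \sum_(i < k) 1 *: F i y).
  by apply/funext => y; apply: eq_bigr => i _; rewrite scale1r.
by rewrite (Jac_lincomb _ dF); apply: eq_bigr => i _; rewrite scale1r.
Qed.

Lemma Jac_id x : Jac id x = 1%:M.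
Proof.
have /Jac_diff -> : 'd id x = id :> (_ -> _) by apply: diff_val.
by apply/matrixP => i j; rewrite !mxE eqxx eq_sym.
Qed.

End Jacobian.

Lemma matrix_variance_identity (R : comPzRingType) n k (a : 'I_k -> R)
    (P : 'I_k -> 'M[R]_n) (F : 'M[R]_n) :
  \sum_(i < k) P i = 1%:M -> \sum_(i < k) a i *: P i = F ->
  \sum_(i < k) ((a i)%:M - F) *m P i *m ((a i)%:M - F)
  = \sum_(i < k) a i ^+ 2 *: P i - F *m F.
Proof.
move=> sumP sumaP.
have expand i : ((a i)%:M - F) *m P i *m ((a i)%:M - F)
    = a i ^+ 2 *: P i - a i *: (F *m P i) - a i *: (P i *m F) + F *m P i *m F.
  rewrite !(mulmxBl, mulmxBr) !(mul_scalar_mx, mul_mx_scalar) -scalemxAl scalerA -expr2.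
  by rewrite opprB addrA addrAC.
have sumFP : \sum_(i < k) a i *: (F *m P i) = F *m F.
  by rewrite -[X in F *m X]sumaP mulmx_sumr; apply: eq_bigr => i _; rewrite scalemxAr.
have sumPF : \sum_(i < k) a i *: (P i *m F) = F *m F.
  by rewrite -[X in X *m F]sumaP mulmx_suml; apply: eq_bigr => i _; rewrite scalemxAl.
have sumFPF : \sum_(i < k) F *m P i *m F = F *m F.
  by rewrite -mulmx_suml -mulmx_sumr sumP mulmx1.
by rewrite (eq_bigr _ (fun i _ => expand i)) big_split /= !sumrB sumFP sumPF sumFPF subrK.
Qed.

Section PositiveDefinite.
Variables (R : realType) (n : nat).

Lemma posdef_sum k (P : 'I_k -> 'M[R]_n) : (0 < k)%N -> (forall i, posdef_mx (P i)) ->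
  posdef_mx (\sum_(i < k) P i).
Proof.
case: k P => // k P _ Ppos; split.
  by rewrite /symmetric_mx raddf_sum; apply: eq_bigr => i _; case: (Ppos i).
move=> v v_neq0; rewrite mulmx_sumr mulmx_suml summxE big_ord_recl.
apply: ltr_wpDr; last by case: (Ppos ord0) => _ /(_ v v_neq0).
by apply: sumr_ge0 => i _; case: (Ppos (lift ord0 i)) => _ /(_ v v_neq0) /ltW.
Qed.

Lemma posdef_congr (N Q : 'M[R]_n) : N \in unitmx -> posdef_mx Q ->
  posdef_mx (N^T *m Q *m N).
Proof.
move=> N_unit [Qsym Q_gt0]; split; first by rewrite /symmetric_mx !trmx_mul trmxK Qsym mulmxA.
move=> v v_neq0.
have -> : v *m (N^T *m Q *m N) *m v^T = v *m N^T *m Q *m (v *m N^T)^T.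
  by rewrite trmx_mul trmxK !mulmxA.
apply: Q_gt0; apply: contra v_neq0 => /eqP vN0.
by rewrite -(mulmxK (_ : N^T \in unitmx) v) ?vN0 ?mul0mx ?unitmx_tr.
Qed.

Lemma posdef_of_partition k (A0 : 'M[R]_n) (P : 'I_k -> 'M[R]_n) : (0 < k)%N ->
  \sum_(i < k) P i = 1%:M -> (forall i, posdef_mx (A0 *m P i)) -> posdef_mx A0.
Proof.
by move=> k_gt0 sumP A0P_pos; rewrite -[A0]mulmx1 -sumP mulmx_sumr; apply: posdef_sum.
Qed.

Lemma posdef_mul_variance k (A0 F : 'M[R]_n) (a : 'I_k -> R) (P : 'I_k -> 'M[R]_n) :
  (0 < k)%N -> \sum_(i < k) P i = 1%:M -> \sum_(i < k) a i *: P i = F ->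
  symmetric_mx A0 -> symmetric_mx (A0 *m F) -> (forall i, posdef_mx (A0 *m P i)) ->
  (forall i, (a i)%:M - F \in unitmx) ->
  posdef_mx (A0 *m (\sum_(i < k) a i ^+ 2 *: P i - F *m F)).
Proof.
move=> k_gt0 sumP sumaP A0sym A0Fsym A0P_pos aF_unit.
have FA0 : F^T *m A0 = A0 *m F by rewrite -[A0 in F^T *m A0]A0sym -trmx_mul A0Fsym.
have shift i : ((a i)%:M - F)^T *m A0 = A0 *m ((a i)%:M - F).
  by rewrite linearB /= tr_scalar_mx mulmxBl mulmxBr mul_scalar_mx mul_mx_scalar FA0.
rewrite -(matrix_variance_identity sumP sumaP) mulmx_sumr.
rewrite (eq_bigr (fun i => ((a i)%:M - F)^T *m (A0 *m P i) *m ((a i)%:M - F))).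
  by apply: posdef_sum => // i; apply: posdef_congr.
by move=> i _; rewrite !mulmxA shift.
Qed.

Lemma posdef_form_ge0 (P : 'M[R]_n) (x : 'rV[R]_n) :
  posdef_mx P -> 0 <= (x *m P *m x^T) 0 0.
Proof.
case=> _ P_gt0; have [->|/P_gt0/ltW //] := eqVneq x 0.
by rewrite !mul0mx mxE.
Qed.

Lemma posdef_form_add_gt0 (P : 'M[R]_n) (x y : 'rV[R]_n) :
  posdef_mx P -> (x != 0) || (y != 0) ->
  0 < (x *m P *m x^T) 0 0 + (y *m P *m y^T) 0 0.
Proof.
move=> Ppos; have [x_ge0 y_ge0] := (posdef_form_ge0 x Ppos, posdef_form_ge0 y Ppos).
case: Ppos => _ P_gt0 /orP[/P_gt0 x_gt0|/P_gt0 y_gt0].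
  exact: ltr_wpDr.
exact: ltr_wpDl.
Qed.

Lemma symmetric_form (P : 'M[R]_n) (x y : 'rV[R]_n) : symmetric_mx P ->
  (x *m P *m y^T) 0 0 = (y *m P *m x^T) 0 0.
Proof.
move=> Psym; transitivity ((x *m P *m y^T)^T 0 0); first by rewrite [RHS]mxE.
by rewrite !trmx_mul trmxK Psym mulmxA.
Qed.

Lemma posdef_unitmx (P : 'M[R]_n) : posdef_mx P -> P \in unitmx.
Proof.
case=> _ P_gt0; rewrite unitmxE unitfE; apply/negP => /det0P[v /P_gt0 + vP0].
by rewrite vP0 mul0mx mxE ltxx.
Qed.

End PositiveDefinite.

Section GeneralizedEigenvalue.
Variables (R : realType) (n : nat).
Local Notation toC := (map_mx (real_complex R)).
Local Open Scope complex_scope.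

Lemma cmxE (P : 'M[R]_n) : cmx P = toC P.
Proof. by []. Qed.

Lemma complex_rowE (w : 'rV[R[i]]_n) :
  w = toC (map_mx (@complex.Re R) w) + 'i%C *: toC (map_mx (@complex.Im R) w).
Proof. by apply/matrixP => i j; rewrite !mxE [LHS]complexE. Qed.

Lemma hermitian_form_symmetric (P : 'M[R]_n) (x y : 'rV[R]_n) : symmetric_mx P ->
  ((toC x + 'i%C *: toC y) *m toC P *m (toC x - 'i%C *: toC y)^T) 0 0
  = ((x *m P *m x^T) 0 0 + (y *m P *m y^T) 0 0)%:C.
Proof.
move=> Psym.
have toC_form (z1 z2 : 'rV[R]_n) : toC z1 *m toC P *m (toC z2)^T = toC (z1 *m P *m z2^T).
  by rewrite map_trmx -!map_mxM.
have yx_xy : y *m P *m x^T = x *m P *m y^T.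
  by apply/matrixP => i j; rewrite !ord1 symmetric_form.
rewrite linearB linearZ /= !mulmxDl !mulmxBr -!scalemxAl -!scalemxAr !toC_form yx_xy.
rewrite scalerA -expr2 sqr_i scaleN1r opprK addrA subrK -map_mxD.
by rewrite !mxE.
Qed.

Lemma real_ratio_gt0 (lam : R[i]) (s a : R) : 0 < s -> 0 < a ->
  s%:C = lam * a%:C -> complex.Im lam = 0 /\ 0 < complex.Re lam.
Proof.
move=> s_gt0 a_gt0; have aC_neq0 : a%:C != 0 by rewrite fmorph_eq0 gt_eqF.
move=> /esym/(canRL (mulfK aC_neq0)); rewrite -fmorph_div => -> /=.
by split; rewrite ?divr_gt0.
Qed.

Lemma eigenvalue_posdef_factor (A S B : 'M[R]_n) : posdef_mx A -> posdef_mx S ->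
  A *m B = S -> forall lam, eigenvalue (cmx B) lam ->
  complex.Im lam = 0 /\ 0 < complex.Re lam.
Proof.
move=> Apos Spos AB_S lam /eigenvalueP[v]; rewrite cmxE => vB v_neq0.
have A_unit := posdef_unitmx Apos.
pose w := v *m toC (invmx A).
have v_wA : v = w *m toC A by rewrite -mulmxA -map_mxM mulVmx // map_mx1 mulmx1.
have wS : w *m toC S = lam *: (w *m toC A).
  by rewrite -AB_S map_mxM mulmxA -v_wA vB v_wA.
set x := map_mx (@complex.Re R) w; set y := map_mx (@complex.Im R) w.
have xy_neq0 : (x != 0) || (y != 0).
  rewrite -negb_and; apply: contra v_neq0 => /andP[/eqP x0 /eqP y0].
  by rewrite v_wA [w]complex_rowE -/x -/y x0 y0 !map_mx0 scaler0 addr0 mul0mx.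
(* [toC x - 'i *: toC y] is the complex conjugate of [w]. *)
have := congr1 (fun N => (N *m (toC x - 'i%C *: toC y)^T) 0 0) wS.
rewrite /= -scalemxAl [RHS]mxE [w]complex_rowE -/x -/y.
have [[Asym _] [Ssym _]] := (Apos, Spos).
rewrite !hermitian_form_symmetric //.
by apply: real_ratio_gt0; apply: posdef_form_add_gt0.
Qed.

End GeneralizedEigenvalue.

Section SpectralRadius.
Variables (R : realType) (n : nat).
Local Notation toC := (map_mx (real_complex R)).
Local Open Scope complex_scope.

Lemma cmodulus_le_spectral_radius (F : 'M[R]_n) lam :
  eigenvalue (cmx F) lam -> cmodulus lam <= spectral_radius F.
Proof.
move=> F_lam; have [rs char_rs] := closed_field_poly_normal (char_poly (cmx F)).
have eig_rs z : eigenvalue (cmx F) z -> z \in rs.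
  rewrite eigenvalue_root_char char_rs rootZ ?root_prod_XsubC //.
  by rewrite (monicP (char_poly_monic _)) oner_eq0.
apply: ub_le_sup; last by exists lam.
exists (\sum_(z <- rs) cmodulus z) => _ [z [/eig_rs z_rs ->]].
by rewrite (big_rem z z_rs) lerDl sumr_ge0 // => w _; apply: sqrtr_ge0.
Qed.

Lemma spectral_radius_lt_unitmx (F : 'M[R]_n) (a : R) :
  spectral_radius F < `|a| -> a%:M - F \in unitmx.
Proof.
move=> F_lt_a; rewrite unitmxE unitfE; apply/negP => /det0P[v v_neq0].
move/eqP; rewrite mulmxBr mul_mx_scalar subr_eq0 eq_sym => /eqP vF.
have : eigenvalue (cmx F) a%:C.
  apply/eigenvalueP; exists (toC v); last by rewrite map_mx_eq0.
  by rewrite -map_mxM vF map_mxZ.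
move/cmodulus_le_spectral_radius; rewrite /cmodulus /= expr0n addr0 sqrtr_sqr.
by rewrite leNgt F_lt_a.
Qed.

End SpectralRadius.

Theorem corollary1 (R : realType) (p k : nat) (hp : (0 < p)%N) (hk : (0 < k)%N)
  (a : 'I_k -> R) (f : 'rV[R]_p -> 'rV[R]_p) (M : 'I_k -> 'rV[R]_p -> 'rV[R]_p)
  (m2 : 'rV[R]_p -> 'rV[R]_p) (u : 'rV[R]_p) (eta : 'rV[R]_p -> R) (A0 : 'M[R]_p) :
  (forall x, differentiable f x) ->
  (forall i x, differentiable (M i) x) ->
  (forall x, \sum_(i < k) M i x = x) ->
  (forall x, \sum_(i < k) a i *: M i x = f x) ->
  (forall x, m2 x = \sum_(i < k) (a i ^+ 2) *: M i x) ->
  (* eta : twice differentiable strictly convex entropy with Hessian A0 at u *)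
  (forall x, differentiable eta x) ->
  (forall j, differentiable ('D_(ebasis j) eta) u) ->
  strictly_convex eta ->
  A0 = hessian eta u ->
  symmetric_mx (A0 *m Jac f u) ->
  (forall i, posdef_mx (A0 *m Jac (M i) u)) ->
  (forall i, spectral_radius (Jac f u) < `|a i|) ->
  let B := Jac m2 u - Jac f u *m Jac f u in
  (forall lam : R[i], eigenvalue (cmx B) lam -> complex.Im lam = 0 /\ 0 < complex.Re lam)
  /\ B \in unitmx.
Proof.
move=> _ dM sumM sumaM m2E _ _ _ _ A0F_sym A0M_pos F_lt_a B.
have dMu i : differentiable (M i) u := dM i u.
have sumJM : \sum_(i < k) Jac (M i) u = 1%:M.
  by rewrite -(Jac_sum dMu) (funext sumM) Jac_id.
have sumaJM : \sum_(i < k) a i *: Jac (M i) u = Jac f u.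
  by rewrite -(Jac_lincomb a dMu) (funext sumaM).
have m2J : Jac m2 u = \sum_(i < k) a i ^+ 2 *: Jac (M i) u.
  by rewrite [m2](funext m2E) (Jac_lincomb _ dMu).
have A0_pos := posdef_of_partition hk sumJM A0M_pos.
have [A0_sym _] := A0_pos.
have aF_unit i : (a i)%:M - Jac f u \in unitmx := spectral_radius_lt_unitmx (F_lt_a i).
have A0B_pos : posdef_mx (A0 *m B).
  rewrite /B m2J.
  exact: posdef_mul_variance hk sumJM sumaJM A0_sym A0F_sym A0M_pos aF_unit.
split; first exact: eigenvalue_posdef_factor A0_pos A0B_pos erefl.
by move: (posdef_unitmx A0B_pos); rewrite unitmx_mul => /andP[].
Qed.
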